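(* Let $H$ be a group and $X=\{x_1,\dots,x_n\}$ a finite set of elements of $H$. Let $H\trianglerighteq N_1\trianglerighteq N_2\trianglerighteq\cdots$ be a central series of $H$ such that $[H,N_i]=N_{i+1}$ for all $i\ge1$. Suppose that for every $i\ge1$ the quotient $H/N_i$ is normally generated by $\{x_1N_i,\dots,x_nN_i\}$. Let $\Gamma=\varprojlim_i H/N_i$ and let $h:H\to\Gamma$ be the natural map. Then $\Gamma$ is normally generated by $\{h(x_1),\dots,h(x_n)\}$.
   Context: A group is normally generated by a subset if the smallest normal subgroup containing that subset is the whole group. *)

From Stdlib Require Import Arith.


Record Group := {
  carrier :> Type;
  gmul : carrier -> carrier -> carrier;
  ginv : carrier -> carrier;
  gone : carrier;
  gmul_assoc : forall a b c, gmul a (gmul b c) = gmul (gmul a b) c;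
  gmul_1l : forall a, gmul gone a = a;
  gmul_1r : forall a, gmul a gone = a;
  gmul_Vl : forall a, gmul (ginv a) a = gone;
  gmul_Vr : forall a, gmul a (ginv a) = gone
}.

Arguments gmul {g} _ _.
Arguments ginv {g} _.
Arguments gone {g}.

Definition is_subgroup (H : Group) (K : H -> Prop) : Prop :=
  K gone /\ (forall a b, K a -> K b -> K (gmul a b)) /\ (forall a, K a -> K (ginv a)).

Definition is_normal_subgroup (H : Group) (K : H -> Prop) : Prop :=
  is_subgroup H K /\ (forall a g, K a -> K (gmul (ginv g) (gmul a g))).

Definition gen_subgroup (H : Group) (S : H -> Prop) : H -> Prop :=
  fun a => forall K : H -> Prop, is_subgroup H K -> (forall s, S s -> K s) -> K a.

Definition commg (H : Group) (a b : H) : H :=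
  gmul (ginv a) (gmul (ginv b) (gmul a b)).

Definition comm_subgroup (H : Group) (N : H -> Prop) : H -> Prop :=
  gen_subgroup H (fun c => exists (a m : H), N m /\ c = commg H a m).

(* Normal generation for a group presented as a "setoid group": elements of
   type T lying in the domain [dom], identified modulo the equivalence [E],
   with operations [mul], [inv], unit [one]. *)
Definition setoid_normally_generated (T : Type) (dom : T -> Prop)
    (E : T -> T -> Prop) (mul : T -> T -> T) (inv : T -> T) (one : T)
    (S : T -> Prop) : Prop :=
  forall K : T -> Prop,
    (forall a b, dom a -> dom b -> E a b -> K a -> K b) ->
    K one ->
    (forall a b, dom a -> dom b -> K a -> K b -> K (mul a b)) ->
    (forall a, dom a -> K a -> K (inv a)) ->
    (forall a g, dom a -> dom g -> K a -> K (mul (inv g) (mul a g))) ->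
    (forall s, dom s -> S s -> K s) ->
    forall a, dom a -> K a.

Arguments setoid_normally_generated {T}.

(* The quotient H/N (N normal): elements of H modulo a ~ b iff a^-1 b in N.
   [quotient_normally_generated H N S] : H/N is normally generated by the
   image {sN | s in S}. *)
Definition quotient_normally_generated (H : Group) (N : H -> Prop)
    (S : H -> Prop) : Prop :=
  setoid_normally_generated (fun _ : carrier H => True)
    (fun a b => N (gmul (ginv a) b)) (@gmul H) (@ginv H) (@gone H) S.

(* The inverse limit Gamma = lim_i H/N_i of the tower H/N_0 <- H/N_1 <- ...
   (index i here corresponds to N_{i+1} in the paper).  An element is a
   compatible sequence of cosets (g_i N_i)_i, represented by g : nat -> H with
   g_{i+1} N_i = g_i N_i; two representatives are equal iff g_i N_i = g'_i N_i
   for all i; operations are coordinatewise. *)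
Definition invlim_dom (H : Group) (N : nat -> H -> Prop) (g : nat -> H) : Prop :=
  forall i, N i (gmul (ginv (g (S i))) (g i)).

Definition invlim_eq (H : Group) (N : nat -> H -> Prop) (g g' : nat -> H) : Prop :=
  forall i, N i (gmul (ginv (g i)) (g' i)).

Definition invlim_mul (H : Group) (g g' : nat -> H) : nat -> H :=
  fun i => gmul (g i) (g' i).

Definition invlim_inv (H : Group) (g : nat -> H) : nat -> H :=
  fun i => ginv (g i).

Definition invlim_one (H : Group) : nat -> H := fun _ => gone.

Definition invlim_nat (H : Group) (a : H) : nat -> H := fun _ => a.

Definition invlim_normally_generated (H : Group) (N : nat -> H -> Prop)
    (S' : (nat -> H) -> Prop) : Prop :=
  setoid_normally_generated (invlim_dom H N) (invlim_eq H N)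
    (invlim_mul H) (invlim_inv H) (invlim_one H) S'.

(* Because [H, N_i] = N_(i+1) and the series is central, [a, m] mod N_(i+2) is
   bilinear in a ∈ H and m ∈ N_i, with values in the central quotient
   N_(i+1)/N_(i+2).  As the x_j normally generate H modulo N_(i+1), every element of
   N_(i+1) is then ∏_j [x_j, m_j] modulo N_(i+2) for some m_j ∈ N_i.  Correcting one
   coordinate at a time, every g ∈ Γ with g_1 ∈ N_1 equals ∏_j [h(x_j), μ_j] for some
   μ_j ∈ Γ.  So a normal subgroup K of Γ containing the h(x_j) contains all such g;
   its preimage under h is therefore a normal subgroup of H containing N_1 and the
   x_j, hence all of H; and every a ∈ Γ is h(a_1) times an element g with g_1 = 1.
   (Indices as in the Rocq statement: the series starts with N_0.) *)

From Stdlib Require Import Arith Lia Setoid Morphisms ClassicalEpsilon.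

Notation "a ** b" := (gmul a b) (at level 40, left associativity).
Notation "a ⁻¹" := (ginv a) (at level 3, format "a ⁻¹").

Section GroupTheory.
Variable G : Group.
Implicit Types a b : G.

Lemma mulgK a b : a ** b ** b⁻¹ = a.
Proof. rewrite <- gmul_assoc, gmul_Vr, gmul_1r; reflexivity. Qed.

Lemma mulgKV a b : a ** b⁻¹ ** b = a.
Proof. rewrite <- gmul_assoc, gmul_Vl, gmul_1r; reflexivity. Qed.

Lemma invg_unique a b : a ** b = gone -> b = a⁻¹.
Proof.
  intro e. rewrite <- (gmul_1l _ b), <- (gmul_Vl _ a), <- gmul_assoc, e, gmul_1r.
  reflexivity.
Qed.

Lemma invMg a b : (a ** b)⁻¹ = b⁻¹ ** a⁻¹.
Proof.
  symmetry. apply invg_unique. rewrite !gmul_assoc, mulgK, gmul_Vr. reflexivity.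
Qed.

Lemma invgK a : a⁻¹⁻¹ = a.
Proof. symmetry. apply invg_unique, gmul_Vl. Qed.

Lemma invg1 : (@gone G)⁻¹ = gone.
Proof. symmetry. apply invg_unique, gmul_1l. Qed.

End GroupTheory.

(* Normal form: inverses pushed to the letters, products associated to the left. *)
Ltac group_simpl :=
  repeat rewrite ?invMg, ?invgK, ?invg1, ?gmul_assoc, ?mulgK, ?mulgKV,
    ?gmul_1l, ?gmul_1r, ?gmul_Vl, ?gmul_Vr.

Lemma invg_commg (G : Group) (a b : G) : (commg G a b)⁻¹ = commg G b a.
Proof. unfold commg. group_simpl. reflexivity. Qed.

Lemma commg1g (G : Group) (a : G) : commg G gone a = gone.
Proof. unfold commg. group_simpl. reflexivity. Qed.

(* Lets setoid rewriting modulo [N] find the normality of [N] by instance search. *)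
Existing Class is_normal_subgroup.

Section NormalSubgroups.
Variables (G : Group) (N : G -> Prop).
Hypothesis N_normal : is_normal_subgroup G N.
Implicit Types a b g : G.

Lemma normal1 : N gone.
Proof. apply N_normal. Qed.

Lemma normalM a b : N a -> N b -> N (a ** b).
Proof. apply N_normal. Qed.

Lemma normalV a : N a -> N a⁻¹.
Proof. apply N_normal. Qed.

Lemma normalJ a g : N a -> N (g⁻¹ ** a ** g).
Proof. intro h. rewrite <- gmul_assoc. apply N_normal, h. Qed.

Definition congr_mod a b := N (a⁻¹ ** b).

Lemma congr_mod1l a : congr_mod gone a <-> N a.
Proof. unfold congr_mod. rewrite invg1, gmul_1l. reflexivity. Qed.

#[export] Instance congr_mod_Equivalence : Equivalence congr_mod.
Proof.
  split.
  - intro a. unfold congr_mod. rewrite gmul_Vl. apply normal1.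
  - intros a b h. unfold congr_mod. apply normalV in h. revert h. group_simpl. auto.
  - intros a b c h1 h2. unfold congr_mod.
    pose proof (normalM _ _ h1 h2) as h. revert h. group_simpl. auto.
Qed.

#[export] Instance gmul_congr_mod : Proper (congr_mod ==> congr_mod ==> congr_mod) (@gmul G).
Proof.
  intros a a' ha b b' hb. unfold congr_mod.
  pose proof (normalM _ _ (normalJ _ b ha) hb) as h. revert h. group_simpl. auto.
Qed.

#[export] Instance ginv_congr_mod : Proper (congr_mod ==> congr_mod) (@ginv G).
Proof.
  intros a b h. unfold congr_mod.
  pose proof (normalJ _ a⁻¹ (normalV _ h)) as h'. revert h'. group_simpl. auto.
Qed.

End NormalSubgroups.

Arguments normal1 {G N} N_normal.
Arguments normalM {G N} N_normal a b.
Arguments normalV {G N} N_normal a.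
Arguments normalJ {G N} N_normal a g.
Arguments congr_mod {G} N a b.
Notation "a ≡ b [mod N ]" := (congr_mod N a b)
  (at level 70, b at next level, format "a  ≡  b  [mod  N ]").

Lemma normal_subgroup_full (G : Group) (N S L : G -> Prop) :
  quotient_normally_generated G N S -> is_normal_subgroup G L ->
  (forall a, N a -> L a) -> (forall s, S s -> L s) -> forall a, L a.
Proof.
  intros gen [[L1 [LM LV]] LJ] NL SL a.
  refine (gen L _ L1 (fun a b _ _ => LM a b) (fun a _ => LV a)
            (fun a g _ _ => LJ a g) (fun s _ => SL s) a I).
  intros b c _ _ hbc hb.
  replace c with (b ** (b⁻¹ ** c)) by (group_simpl; reflexivity). auto.
Qed.

Fixpoint commg_prod (G : Group) (x m : nat -> G) (k : nat) : G :=
  match k with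
  | 0 => gone
  | S k => commg_prod G x m k ** commg G (x k) (m k)
  end.

Lemma commg_prod_ext (G : Group) (x m m' : nat -> G) k :
  (forall j, m j = m' j) -> commg_prod G x m k = commg_prod G x m' k.
Proof. intro e. induction k; simpl; auto. rewrite IHk, e. reflexivity. Qed.

Lemma commg_prod1 (G : Group) (x : nat -> G) k : commg_prod G x (fun _ => gone) k = gone.
Proof. induction k; simpl; auto. rewrite IHk. unfold commg. group_simpl. reflexivity. Qed.

Lemma commg_prod_delta (G : Group) (x : nat -> G) m j k :
  commg_prod G x (fun l => if l =? j then m else gone) k =
  if j <? k then commg G (x j) m else gone.
Proof.
  induction k; simpl; auto. rewrite IHk.
  destruct (Nat.eqb_spec k j) as [->|ne].
  - rewrite Nat.ltb_irrefl, (proj2 (Nat.ltb_lt j (S j))) by lia. group_simpl. reflexivity.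
  - destruct (Nat.ltb_spec j k), (Nat.ltb_spec j (S k)); try lia;
      unfold commg; group_simpl; reflexivity.
Qed.

Definition invlim_commg (H : Group) (a b : nat -> H) : nat -> H :=
  invlim_mul H (invlim_inv H a) (invlim_mul H (invlim_inv H b) (invlim_mul H a b)).

Fixpoint invlim_commg_prod (H : Group) (x : nat -> H) (mu : nat -> nat -> H) (k : nat)
    : nat -> H :=
  match k with
  | 0 => invlim_one H
  | S k =>
      invlim_mul H (invlim_commg_prod H x mu k) (invlim_commg H (invlim_nat H (x k)) (mu k))
  end.

Lemma invlim_commg_prodE (H : Group) x mu k i :
  invlim_commg_prod H x mu k i = commg_prod H x (fun j => mu j i) k.
Proof. induction k; simpl; auto. unfold invlim_mul at 1. rewrite IHk. reflexivity. Qed.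

Section InverseLimit.
Variables (H : Group) (N : nat -> H -> Prop).
Hypothesis N_normal : forall i, is_normal_subgroup H (N i).
#[local] Existing Instance N_normal.

Lemma invlim_dom_mul a b :
  invlim_dom H N a -> invlim_dom H N b -> invlim_dom H N (invlim_mul H a b).
Proof. intros ha hb i. exact (gmul_congr_mod _ _ _ _ _ (ha i) _ _ (hb i)). Qed.

Lemma invlim_dom_inv a : invlim_dom H N a -> invlim_dom H N (invlim_inv H a).
Proof. intros ha i. exact (ginv_congr_mod _ _ _ _ _ (ha i)). Qed.

Lemma invlim_dom_nat a : invlim_dom H N (invlim_nat H a).
Proof. intro i. change (a ≡ a [mod N i]). reflexivity. Qed.

Lemma invlim_dom_commg a b :
  invlim_dom H N a -> invlim_dom H N b -> invlim_dom H N (invlim_commg H a b).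
Proof. intros ha hb. repeat apply invlim_dom_mul; auto using invlim_dom_inv. Qed.

Lemma invlim_dom_commg_prod x mu k :
  (forall j, invlim_dom H N (mu j)) -> invlim_dom H N (invlim_commg_prod H x mu k).
Proof.
  intro hmu. induction k; simpl.
  - apply invlim_dom_nat.
  - apply invlim_dom_mul; auto using invlim_dom_commg, invlim_dom_nat.
Qed.

Definition invlim_rebase (a : nat -> H) : nat -> H := fun i => (a 1)⁻¹ ** a i.

Lemma invlim_dom_rebase a : invlim_dom H N a -> invlim_dom H N (invlim_rebase a).
Proof. intros ha i. unfold invlim_rebase. group_simpl. apply ha. Qed.

Lemma invlim_eq_rebase a :
  invlim_eq H N (invlim_mul H (invlim_nat H (a 1)) (invlim_rebase a)) a.
Proof.
  intro i. unfold invlim_mul, invlim_nat, invlim_rebase. group_simpl.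
  apply (normal1 (N_normal i)).
Qed.

End InverseLimit.

Section CentralSeries.
Variables (H : Group) (N : nat -> H -> Prop).
Hypothesis N_normal : forall i, is_normal_subgroup H (N i).
Hypothesis N_desc : forall i a, N (S i) a -> N i a.
Hypothesis N_comm : forall i a, comm_subgroup H (N i) a <-> N (S i) a.
#[local] Existing Instance N_normal.
#[local] Hint Resolve invlim_dom_nat : core.

Lemma commg_mem i a m : N i m -> N (S i) (commg H a m).
Proof. intro hm. apply N_comm. intros K _ K_gen. apply K_gen. eauto. Qed.

Lemma commg_memV i a m : N i m -> N (S i) (commg H m a).
Proof. intro hm. rewrite <- invg_commg. apply (normalV (N_normal _)), commg_mem, hm. Qed.

Lemma central_mod i y g : N (S i) y -> y ** g ≡ g ** y [mod N (S (S i))].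
Proof.
  intro hy. unfold congr_mod.
  replace ((y ** g)⁻¹ ** (g ** y)) with (commg H g y)
    by (unfold commg; group_simpl; reflexivity).
  apply commg_mem, hy.
Qed.

Lemma conjg_central_mod i y g : N (S i) y -> g⁻¹ ** y ** g ≡ y [mod N (S (S i))].
Proof.
  intro hy. rewrite <- gmul_assoc, (central_mod i y g hy). group_simpl. reflexivity.
Qed.

Lemma commgMl i a b m : N i m ->
  commg H (a ** b) m ≡ commg H a m ** commg H b m [mod N (S (S i))].
Proof.
  intro hm.
  replace (commg H (a ** b) m) with (b⁻¹ ** commg H a m ** b ** commg H b m)
    by (unfold commg; group_simpl; reflexivity).
  rewrite (conjg_central_mod i); [reflexivity | apply commg_mem, hm].
Qed.

Lemma commgMr i a m v : N i m ->
  commg H a (m ** v) ≡ commg H a v ** commg H a m [mod N (S (S i))].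
Proof.
  intro hm.
  replace (commg H a (m ** v)) with (commg H a v ** (v⁻¹ ** commg H a m ** v))
    by (unfold commg; group_simpl; reflexivity).
  rewrite (conjg_central_mod i); [reflexivity | apply commg_mem, hm].
Qed.

Lemma commgVl i a m : N i m -> commg H a⁻¹ m ≡ (commg H a m)⁻¹ [mod N (S (S i))].
Proof.
  intro hm.
  transitivity (commg H a⁻¹ m ** commg H a m ** (commg H a m)⁻¹).
  { rewrite mulgK. reflexivity. }
  rewrite <- (commgMl i a⁻¹ a m hm), gmul_Vl, commg1g, gmul_1l. reflexivity.
Qed.

Lemma commg_prod_mem i x m k : (forall j, N i (m j)) -> N (S i) (commg_prod H x m k).
Proof.
  intro hm. induction k; simpl.
  - apply (normal1 (N_normal _)).
  - apply (normalM (N_normal _)); [exact IHk | apply commg_mem, hm].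
Qed.

Lemma commg_prodM i x m v k : (forall j, N i (m j)) ->
  commg_prod H x (fun j => m j ** v j) k
  ≡ commg_prod H x v k ** commg_prod H x m k [mod N (S (S i))].
Proof.
  intro hm. induction k; simpl.
  - rewrite gmul_1l. reflexivity.
  - rewrite IHk, (commgMr i _ _ _ (hm k)).
    set (A := commg_prod H x v k). set (B := commg_prod H x m k).
    set (c := commg H (x k) (v k)). set (c' := commg H (x k) (m k)).
    replace (A ** B ** (c ** c')) with (A ** (B ** c) ** c')
      by (group_simpl; reflexivity).
    rewrite (central_mod i B c) by (apply commg_prod_mem, hm).
    group_simpl. reflexivity.
Qed.

Lemma commg_prodV i x m k : (forall j, N i (m j)) ->
  commg_prod H x (fun j => (m j)⁻¹) k ≡ (commg_prod H x m k)⁻¹ [mod N (S (S i))].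
Proof.
  intro hm.
  assert (hmV : forall j, N i (m j)⁻¹) by (intro; apply (normalV (N_normal _)), hm).
  pose proof (commg_prodM i x _ m k hmV) as e.
  rewrite (commg_prod_ext H x _ (fun _ => gone)), commg_prod1 in e
    by (intro; apply gmul_Vl).
  rewrite <- (gmul_1r _ (_⁻¹)), e. group_simpl. reflexivity.
Qed.

Variables (n : nat) (x : nat -> H).

Definition commg_repr_by i (c : H) (m : nat -> H) : Prop :=
  (forall j, N i (m j)) /\ c ≡ commg_prod H x m n [mod N (S (S i))].

Definition commg_repr i (c : H) : Prop := exists m, commg_repr_by i c m.

Lemma commg_repr_congr i c c' :
  c ≡ c' [mod N (S (S i))] -> commg_repr i c -> commg_repr i c'.
Proof. intros e [m [hm e']]. exists m. split; [exact hm |]. rewrite <- e. exact e'. Qed.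

Lemma commg_repr_subgroup i : is_subgroup H (commg_repr i).
Proof.
  split; [| split].
  - exists (fun _ => gone). split; [intro; apply (normal1 (N_normal _)) |].
    rewrite commg_prod1. reflexivity.
  - intros a b [m [hm ea]] [m' [hm' eb]].
    exists (fun j => m' j ** m j). split; [intro; apply (normalM (N_normal _)); auto |].
    rewrite (commg_prodM i x m' m n hm'), ea, eb. reflexivity.
  - intros a [m [hm ea]]. exists (fun j => (m j)⁻¹).
    split; [intro; apply (normalV (N_normal _)), hm |].
    rewrite (commg_prodV i x m n hm), ea. reflexivity.
Qed.

Hypothesis x_gen :
  forall i, quotient_normally_generated H (N i) (fun g => exists j, j < n /\ g = x j).

(* Modulo [N (S (S i))], [a |-> [a, m]] is a homomorphism into a central subgroup,
   so the [a] for which all these commutators are representable form a normal subgroup. *)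
Lemma commg_repr_normal i :
  is_normal_subgroup H (fun a => forall m, N i m -> commg_repr i (commg H a m)).
Proof.
  destruct (commg_repr_subgroup i) as [repr1 [reprM reprV]].
  split; [split; [| split] |].
  - intros m _. rewrite commg1g. exact repr1.
  - intros a b ha hb m hm. apply commg_repr_congr with (commg H a m ** commg H b m).
    + symmetry. apply commgMl, hm.
    + apply reprM; auto.
  - intros a ha m hm. apply commg_repr_congr with (commg H a m)⁻¹.
    + symmetry. apply commgVl, hm.
    + apply reprV; auto.
  - intros a g ha m hm. apply commg_repr_congr with (commg H a m); [| auto].
    rewrite (commgMl i _ _ _ hm), (commgMl i _ _ _ hm), (commgVl i _ _ hm), gmul_assoc.
    symmetry. apply conjg_central_mod, commg_mem, hm.
Qed.

Lemma commg_repr_commg i a m : N i m -> commg_repr i (commg H a m).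
Proof.
  revert m. apply (normal_subgroup_full H _ _ _ (x_gen (S i)) (commg_repr_normal i)).
  - intros b hb m hm. apply commg_repr_congr with gone.
    + apply congr_mod1l, (commg_memV (S i)), hb.
    + apply (commg_repr_subgroup i).
  - intros s [j [hj ->]] m hm.
    exists (fun l => if l =? j then m else gone). split.
    + intro l. destruct (l =? j); [exact hm | apply (normal1 (N_normal _))].
    + rewrite commg_prod_delta, (proj2 (Nat.ltb_lt j n) hj). reflexivity.
Qed.

Lemma commg_repr_mem i e : N (S i) e -> commg_repr i e.
Proof.
  intro he. apply N_comm in he. apply he; [apply commg_repr_subgroup |].
  intros c [a [m [hm ->]]]. apply commg_repr_commg, hm.
Qed.

Definition commg_coef i (c : H) : nat -> H :=
  epsilon (inhabits (fun _ => gone)) (commg_repr_by i c).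

Lemma commg_coef_spec i c : N (S i) c -> commg_repr_by i c (commg_coef i c).
Proof. intro hc. exact (epsilon_spec _ _ (commg_repr_mem i c hc)). Qed.

Section LimitCoefficients.
Variable g : nat -> H.
Hypothesis g_dom : invlim_dom H N g.
Hypothesis g_mem1 : N 1 (g 1).

(* [limit_coef i j] is the [i]-th coordinate of [mu_j] in
   [g = prod_(j < n) [invlim_nat (x j), mu_j]], built by successive correction:
   the error left at stage [i] lies in [N (S i)] and is absorbed by [commg_repr_mem]. *)
Fixpoint limit_coef i : nat -> H :=
  match i with
  | 0 => fun _ => gone
  | S i =>
      let v := limit_coef i in
      let m := commg_coef i ((commg_prod H x v n)⁻¹ ** g (S (S i))) in
      fun j => m j ** v j
  end.

Lemma limit_error_mem i :
  g (S i) ≡ commg_prod H x (limit_coef i) n [mod N (S i)] ->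
  N (S i) ((commg_prod H x (limit_coef i) n)⁻¹ ** g (S (S i))).
Proof.
  intro e. change (commg_prod H x (limit_coef i) n ≡ g (S (S i)) [mod N (S i)]).
  rewrite <- e. symmetry. apply g_dom.
Qed.

Lemma limit_coef_spec i : g (S i) ≡ commg_prod H x (limit_coef i) n [mod N (S i)].
Proof.
  induction i as [| i IHi].
  - simpl. rewrite commg_prod1. symmetry. apply congr_mod1l, g_mem1.
  - destruct (commg_coef_spec i _ (limit_error_mem i IHi)) as [hm e].
    simpl. rewrite (commg_prodM i x _ _ n hm), <- e. group_simpl. reflexivity.
Qed.

Lemma limit_coef_dom j : invlim_dom H N (fun i => limit_coef i j).
Proof.
  intro i. destruct (commg_coef_spec i _ (limit_error_mem i (limit_coef_spec i))) as [hm _].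
  simpl. rewrite invMg.
  apply (normalJ (N_normal _)), (normalV (N_normal _)), hm.
Qed.

Lemma limit_commg_prod_eq :
  invlim_eq H N (invlim_commg_prod H x (fun j i => limit_coef i j) n) g.
Proof.
  intro i. change (invlim_commg_prod H x (fun j i => limit_coef i j) n i ≡ g i [mod N i]).
  rewrite invlim_commg_prodE.
  transitivity (g (S i)); [| apply g_dom].
  symmetry. apply N_desc, limit_coef_spec.
Qed.

End LimitCoefficients.

Section LimitNormalSubgroup.
Variable K : (nat -> H) -> Prop.
Hypothesis K_congr : forall a b, invlim_dom H N a -> invlim_dom H N b ->
  invlim_eq H N a b -> K a -> K b.
Hypothesis K_one : K (invlim_one H).
Hypothesis K_mul : forall a b, invlim_dom H N a -> invlim_dom H N b ->
  K a -> K b -> K (invlim_mul H a b).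
Hypothesis K_inv : forall a, invlim_dom H N a -> K a -> K (invlim_inv H a).
Hypothesis K_conj : forall a g, invlim_dom H N a -> invlim_dom H N g ->
  K a -> K (invlim_mul H (invlim_inv H g) (invlim_mul H a g)).
Hypothesis K_x : forall j, j < n -> K (invlim_nat H (x j)).

Lemma invlim_normal_commg a b :
  invlim_dom H N a -> invlim_dom H N b -> K a -> K (invlim_commg H a b).
Proof. intros ha hb Ka. apply K_mul; auto using invlim_dom_inv, invlim_dom_mul. Qed.

Lemma invlim_normal_commg_prod mu k :
  (forall j, invlim_dom H N (mu j)) -> k <= n -> K (invlim_commg_prod H x mu k).
Proof.
  intros hmu. induction k as [| k IHk]; intro hk; simpl; [exact K_one |].
  apply K_mul; auto using invlim_dom_commg_prod, invlim_dom_commg, invlim_dom_nat with arith.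
  apply invlim_normal_commg; auto using invlim_dom_nat.
Qed.

Lemma invlim_normal_mem1 g : invlim_dom H N g -> N 1 (g 1) -> K g.
Proof.
  intros hg hg1. pose proof (limit_coef_dom g hg hg1) as hmu.
  apply (K_congr (invlim_commg_prod H x (fun j i => limit_coef g i j) n) g).
  - apply invlim_dom_commg_prod; assumption.
  - exact hg.
  - apply limit_commg_prod_eq; assumption.
  - apply invlim_normal_commg_prod; [assumption | constructor].
Qed.

Lemma invlim_nat_preimage_normal : is_normal_subgroup H (fun a => K (invlim_nat H a)).
Proof.
  split; [split; [| split] |].
  - exact K_one.
  - intros a b. apply (K_mul (invlim_nat H a) (invlim_nat H b)); auto.
  - intros a. apply (K_inv (invlim_nat H a)); auto.
  - intros a g. apply (K_conj (invlim_nat H a) (invlim_nat H g)); auto.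
Qed.

Lemma invlim_normal_nat a : K (invlim_nat H a).
Proof.
  revert a. apply (normal_subgroup_full H (N 1) _ _ (x_gen 1) invlim_nat_preimage_normal).
  - intros m hm. apply invlim_normal_mem1; auto.
  - intros s [j [hj ->]]. apply K_x, hj.
Qed.

Lemma invlim_normal_full a : invlim_dom H N a -> K a.
Proof.
  intro ha. pose proof (invlim_dom_rebase H N a ha) as hb.
  assert (hb1 : N 1 (invlim_rebase H a 1)).
  { unfold invlim_rebase. rewrite gmul_Vl. apply (normal1 (N_normal 1)). }
  apply (K_congr (invlim_mul H (invlim_nat H (a 1)) (invlim_rebase H a)) a).
  - apply invlim_dom_mul; auto.
  - exact ha.
  - apply invlim_eq_rebase, N_normal.
  - apply K_mul; auto using invlim_normal_nat, invlim_normal_mem1.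
Qed.

End LimitNormalSubgroup.

End CentralSeries.

Theorem mainTheorem2 (H : Group) (n : nat) (x : nat -> H)
    (N : nat -> H -> Prop)
    (hN_normal : forall i, is_normal_subgroup H (N i))
    (hN_desc : forall i a, N (S i) a -> N i a)
    (hN_comm : forall i a, comm_subgroup H (N i) a <-> N (S i) a)
    (hgen : forall i,
        quotient_normally_generated H (N i) (fun g => exists j, j < n /\ g = x j)) :
  invlim_normally_generated H N
    (fun gam => exists j, j < n /\ gam = invlim_nat H (x j)).
Proof.
  intros K K_congr K_one K_mul K_inv K_conj K_gen.
  assert (K_x : forall j, j < n -> K (invlim_nat H (x j))).
  { intros j hj. apply K_gen; [apply invlim_dom_nat, hN_normal | eauto]. }
  exact (invlim_normal_full H N hN_normal hN_desc hN_comm n x hgen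
           K K_congr K_one K_mul K_inv K_conj K_x).
Qed.
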